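(* Let $P=[p_{f,k}]$, $f\in[0,F)$, $k\in[0,K)$, be a $(K,F,S)$ MRA. Consider the MADC model with $F$ batches of files $B_0,\dots,B_{F-1}$, $F$ mapper nodes indexed by $[0,F)$, and $K$ reducer nodes indexed by $[0,K)$, in which mapper node $f$ stores exactly the batch $B_f$ (so $M_f=\{B_f\}$) and reducer node $k$ is connected exactly to the mapper nodes in $\{f\in[0,F):\ p_{f,k}=*\}$. Then this model has computation load $r=1$, and the communication load $$L(1)=\frac{S}{KF}+\sum_{g=2}^{K}\frac{S_g}{KF(g-1)}$$ is achievable, where $S_g$ denotes the number of integers in $[0,S)$ that appear exactly $g$ times in $P$.
   Context: Notation: $[0,n)=\{0,1,\dots,n-1\}$, $[n]=\{1,\dots,n\}$. MADC (multi-access distributed computing) model: There are $\Lambda$ mapper nodes indexed by $[0,\Lambda)$ and $K$ reducer nodes indexed by $[0,K)$. There are $N$ input files $w_0,\dots,w_{N-1}\in\mathbb{F}_{2^d}$ and $Q$ output functions $\phi_q:\mathbb{F}_{2^d}^N\to\mathbb{F}_{2^b}$, $q\in[0,Q)$, of the form $\phi_q(w_0,\dots,w_{N-1})=h_q(v_{q,0},\dots,v_{q,N-1})$, where $v_{q,n}=g_{q,n}(w_n)\in\mathbb{F}_{2^t}$ is called an intermediate value (IV). Each reducer node $k$ is assigned a set $\mathcal W_k\subseteq[0,Q)$ of $Q/K$ output functions, these sets being pairwise disjoint. The files are partitioned into $F$ disjoint batches of $N/F$ files each. Map phase: each mapper node $\lambda$ stores a set $M_\lambda$ of batches and computes all IVs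 $v_{q,n}$, $q\in[0,Q)$, for all files $w_n$ in its stored batches. Each reducer node is connected to a set of mapper nodes and has access to every batch stored at any mapper node it is connected to, together with all IVs computed from those batches. Shuffle phase: each reducer node $k$ broadcasts to all other reducer nodes, error-free, a message $\mathbf X_k$ of $l_k$ bits that is a function of the IVs it has access to. Reduce phase: each reducer node $k$ must recover all IVs $v_{q,n}$ with $q\in\mathcal W_k$, $n\in[0,N)$, from the received messages and the IVs it has access to. The computation load is $r=\sum_{\lambda=0}^{\Lambda-1}|M_\lambda|/F$ and the communication load is $L=\sum_{k=0}^{K-1}l_k/(QNt)$. A communication load $L$ is achievable for a given model (given batches, mapper storage and mapper–reducer connections) if there exists a shuffle/reduce scheme satisfying all decoding requirements that attains $L$ (for a suitable choice of the number of files per batch, the number of functions per reducer, and the IV length $t$). Map-Reduce Array (MRA): For positive integers $K,F,S$, an $F\times K$ array $P=[p_{f,k}]$, $f\in[0,F)$, $k\in[0,K)$, whose entries are either the symbol $*$ or integers from $[0,S)$, with every integer of $[0,S)$ occurring in $P$, is a $(K,F,S)$ MRA if: (C1) each integer occurs more than once in $P$; (C2) whenever two distinct entries satisfy $p_{f_1,k_1}=p_{f_2,k_2}=s$ with $s$ an integer, then $f_1\neq f_2$, $k_1\neq k_2$, and $p_{f_1,k_2}=p_{f_2,k_1}=*$. *)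

From HB Require Import structures.
From mathcomp Require Import all_boot all_order all_algebra.
Set Implicit Arguments. Unset Strict Implicit. Unset Printing Implicit Defensive.
Import Order.TTheory GRing.Theory Num.Theory.

(* An F x K array with entries either * (None) or an integer of [0,S) (Some s). *)

Definition occ (K F S : nat) (P : 'M[option 'I_S]_(F, K)) (s : 'I_S)
  : {set 'I_F * 'I_K} :=
  [set fk | P fk.1 fk.2 == Some s].

Definition is_MRA (K F S : nat) (P : 'M[option 'I_S]_(F, K)) : Prop :=
  [/\ 0 < K, 0 < F & 0 < S] /\
  [/\
      (forall s : 'I_S, exists f k, P f k = Some s),
      (forall s : 'I_S, 1 < #|occ P s|) &
      (forall (s : 'I_S) (f1 f2 : 'I_F) (k1 k2 : 'I_K),
          (f1, k1) <> (f2, k2) -> P f1 k1 = Some s -> P f2 k2 = Some s ->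
          [/\ f1 <> f2, k1 <> k2, P f1 k2 = None & P f2 k1 = None])].

Definition S_count (K F S : nat) (P : 'M[option 'I_S]_(F, K)) (g : nat) : nat :=
  #|[set s : 'I_S | #|occ P s| == g]|.

(* Lam mapper nodes, K reducer nodes, F batches.
   M lam = set of batches stored at mapper lam,
   conn k = set of mapper nodes reducer k is connected to. *)

Definition comp_load (Lam F : nat) (M : 'I_Lam -> {set 'I_F}) : rat :=
  ((\sum_(lam < Lam) #|M lam|)%:R / F%:R)%R.

(* With eta files per batch (N = F * eta), file n lies in batch n %/ eta.
   Reducer k has access to file n (and all its IVs) iff some mapper it is
   connected to stores the batch of n. *)
Definition has_access (Lam K F eta : nat) (M : 'I_Lam -> {set 'I_F})
  (conn : 'I_K -> {set 'I_Lam}) (k : 'I_K) (n : nat) : bool :=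
  [exists lam in conn k, exists b in M lam, val b == n %/ eta].

(* An assignment of all intermediate values v_{q,n} (t-bit values),
   with Q = K * qpr output functions and N = F * eta files. *)
Definition IVs (Q N t : nat) := 'I_Q -> 'I_N -> t.-tuple bool.

(* Achievability of a communication load L: there exist eta files per batch,
   qpr output functions per reducer (reducer k is assigned the functions q
   with q %/ qpr = k), an IV length t, message lengths l_k, encoders
   (each message X_k is a function of the IVs reducer k has access to) and
   decoders (reducer k decodes from the messages of the other reducers and
   the IVs it has access to) recovering every needed IV, for every possible
   value of the IVs, with L = sum_k l_k / (Q N t). *)
Definition achievable (Lam K F : nat) (M : 'I_Lam -> {set 'I_F})
  (conn : 'I_K -> {set 'I_Lam}) (L : rat) : Prop :=
  exists (eta qpr t : nat) (l : 'I_K -> nat)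
    (enc : forall k : 'I_K, IVs (K * qpr) (F * eta) t -> (l k).-tuple bool)
    (dec : forall k : 'I_K, (forall j : 'I_K, (l j).-tuple bool) ->
             IVs (K * qpr) (F * eta) t -> IVs (K * qpr) (F * eta) t),
    [/\ 0 < eta, 0 < qpr & 0 < t] /\
    [/\
      (forall (k : 'I_K) (v v' : IVs (K * qpr) (F * eta) t),
          (forall (q : 'I_(K * qpr)) (n : 'I_(F * eta)), has_access eta M conn k n -> v q n = v' q n) ->
          enc k v = enc k v'),
      (forall (k : 'I_K) (m m' : forall j : 'I_K, (l j).-tuple bool)
              (v v' : IVs (K * qpr) (F * eta) t),
          (forall j, j <> k -> m j = m' j) ->
          (forall (q : 'I_(K * qpr)) (n : 'I_(F * eta)), has_access eta M conn k n -> v q n = v' q n) ->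
          dec k m v = dec k m' v'),
      (forall (k : 'I_K) (v : IVs (K * qpr) (F * eta) t) (q : 'I_(K * qpr)) (n : 'I_(F * eta)),
          q %/ qpr = k -> dec k (fun j => enc j v) v q n = v q n) &
      L = ((\sum_(k < K) l k)%:R / (K * qpr * (F * eta) * t)%:R)%R].

Definition MRA_storage (F : nat) : 'I_F -> {set 'I_F} := fun f => [set f].
Definition MRA_conn (K F S : nat) (P : 'M[option 'I_S]_(F, K)) : 'I_K -> {set 'I_F} :=
  fun k => [set f | P f k == None].

From mathcomp Require Import all_boot all_algebra ring.
From Stdlib Require Import FunctionalExtensionality.
Import GRing.Theory Num.Theory.
Set Implicit Arguments. Unset Strict Implicit. Unset Printing Implicit Defensive.

(* An integer s occurring g times in P marks g reducers, each missing exactly the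
   batch of its own occurrence while having access to the g - 1 batches of the other
   occurrences.  Split every batch into g - 1 segments of eta / (g - 1) files, one per
   other occurrence.  For each occurrence y and offset p, reducer y.2 broadcasts the
   XOR of the p-th one-bit IV of the segment it is in charge of in each other
   occurrence's batch; every recipient knows all but one summand and recovers its IV.
   Integer s thus costs g * eta / (g - 1) = eta + eta / (g - 1) bits, and with
   eta = K! (a multiple of every g - 1 < K) normalising by K F eta gives the load. *)

(* IVs are addressed by (function, file) pairs of naturals; out-of-range pairs read
   as [false]. *)
Definition iv_bit (Q N : nat) (v : IVs Q N 1) (e : nat * nat) : bool :=
  match insub e.1, insub e.2 with
  | Some q, Some n => thead (v q n)
  | _, _ => false
  end.

Definition xor_ivs (Q N : nat) (v : IVs Q N 1) (L : seq (nat * nat)) : bool :=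
  \big[addb/false]_(e <- L) iv_bit v e.

Lemma iv_bitE (Q N : nat) (v : IVs Q N 1) (q : 'I_Q) (n : 'I_N) :
  iv_bit v (val q, val n) = thead (v q n).
Proof. by rewrite /iv_bit /= !valK. Qed.

Lemma eq_iv_bit (Q N : nat) (A : pred nat) (v v' : IVs Q N 1) (e : nat * nat) :
  (forall q n, A (val n) -> v q n = v' q n) -> A e.2 -> iv_bit v e = iv_bit v' e.
Proof.
move=> eq_vA Ae; rewrite /iv_bit; case: (insub e.1) => [q|] //.
by case: insubP => [n _ En|] //; rewrite eq_vA // En.
Qed.

Lemma tuple1_thead (T : Type) (t : 1.-tuple T) : [tuple thead t] = t.
Proof. by apply: eq_from_tnth => i; rewrite (ord1 i). Qed.

Section XorCoding.

Variables (Lam K F eta : nat) (M : 'I_Lam -> {set 'I_F}) (conn : 'I_K -> {set 'I_Lam}).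
Variable codes : 'I_K -> seq (seq (nat * nat)).

Local Notation acc k n := (has_access eta M conn k n).
Local Notation IV := (IVs (K * 1) (F * eta) 1).

Definition decodes_from (k : 'I_K) (e : nat * nat) (L : seq (nat * nat)) : bool :=
  [&& uniq L, e \in L & all (fun e' => (e' == e) || acc k e'.2) L].

Hypothesis codes_accessible :
  forall (j : 'I_K) L e, L \in codes j -> e \in L -> acc j e.2.
Hypothesis codes_decodable :
  forall (k : 'I_K) (n : 'I_(F * eta)), ~~ acc k n ->
  exists j : 'I_K, (j != k) && has (decodes_from k (val k, val n)) (codes j).

Definition xor_enc (j : 'I_K) (v : IV) : (size (codes j)).-tuple bool :=
  map_tuple (xor_ivs v) (in_tuple (codes j)).

Definition xor_decode_bit (k : 'I_K) (m : forall j : 'I_K, (size (codes j)).-tuple bool)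
    (v : IV) (e : nat * nat) : bool :=
  if [pick j | (j != k) && has (decodes_from k e) (codes j)] is Some j then
    let i := find (decodes_from k e) (codes j) in
    nth false (m j) i (+) \big[addb/false]_(e' <- nth [::] (codes j) i | e' != e) iv_bit v e'
  else false.

Definition xor_dec (k : 'I_K) (m : forall j : 'I_K, (size (codes j)).-tuple bool)
    (v : IV) : IV :=
  fun q n => if acc k n then v q n else [tuple xor_decode_bit k m v (val q, val n)].

Lemma xor_enc_local (j : 'I_K) (v v' : IV) :
  (forall q (n : 'I_(F * eta)), acc j n -> v q n = v' q n) -> xor_enc j v = xor_enc j v'.
Proof.
move=> eq_v; apply: val_inj; apply/eq_in_map => L Lj.
apply: eq_big_seq => e eL; apply: (eq_iv_bit (A := fun n : nat => acc j n)) => //.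
exact: codes_accessible Lj eL.
Qed.

Lemma xor_dec_local (k : 'I_K) (m m' : forall j : 'I_K, (size (codes j)).-tuple bool)
    (v v' : IV) :
  (forall j, j <> k -> m j = m' j) -> (forall q (n : 'I_(F * eta)), acc k n -> v q n = v' q n) ->
  xor_dec k m v = xor_dec k m' v'.
Proof.
move=> eq_m eq_v; apply: functional_extensionality => q.
apply: functional_extensionality => n; rewrite /xor_dec.
case: ifP => [/eq_v // | _]; congr [tuple _]; rewrite /xor_decode_bit.
case: pickP => [j /andP [/eqP jk has_j] | //]; rewrite eq_m //; congr addb.
set L := nth _ _ _; have /and3P [_ _ /allP accL] : decodes_from k (val q, val n) L.
  exact: nth_find.
rewrite [LHS]big_seq_cond [RHS]big_seq_cond; apply: eq_bigr => e /andP [eL ne].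
apply: (eq_iv_bit (A := fun n : nat => acc k n)) => //.
by have := accL e eL; rewrite (negbTE ne).
Qed.

Lemma xor_decode_bitE (k : 'I_K) (v : IV) (e : nat * nat) :
  (exists j : 'I_K, (j != k) && has (decodes_from k e) (codes j)) ->
  xor_decode_bit k (xor_enc ^~ v) v e = iv_bit v e.
Proof.
move=> [j0 j0P]; rewrite /xor_decode_bit; case: pickP => [j /andP [_ has_j] | /(_ j0)];
  last by rewrite j0P.
have ltL := has_j; rewrite has_find in ltL; set i := find _ _ in ltL *.
have /and3P [uL eL _] : decodes_from k e (nth [::] (codes j) i) by exact: nth_find.
by rewrite (nth_map [::]) //= /xor_ivs (bigD1_seq e) //= addbK.
Qed.

Lemma achievable_xor_codes :
  0 < eta ->
  achievable M conn ((\sum_(k < K) size (codes k))%:R / (K * F * eta)%:R)%R.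
Proof.
move=> eta_gt0; exists eta, 1%N, 1%N, (fun k => size (codes k)), xor_enc, xor_dec.
split=> //; split; [exact: xor_enc_local | exact: xor_dec_local | | ].
  move=> k v q n; rewrite divn1 => qk; rewrite /xor_dec.
  case: ifPn => // nacc; rewrite -[RHS]tuple1_thead -iv_bitE; congr [tuple _].
  have -> : val q = val k := qk; exact/xor_decode_bitE/codes_decodable.
by rewrite !muln1 mulnA.
Qed.

End XorCoding.

Lemma comp_load_MRA_storage (F : nat) : 0 < F -> comp_load (@MRA_storage F) = 1%R.
Proof.
move=> F_gt0; rewrite /comp_load /MRA_storage.
under eq_bigr do rewrite cards1.
by rewrite sum1_card card_ord divff // pnatr_eq0 -lt0n.
Qed.

Lemma has_access_MRA (K F S eta : nat) (P : 'M[option 'I_S]_(F, K)) (k : 'I_K)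
    (f : 'I_F) (n : nat) :
  val f = n %/ eta -> has_access eta (@MRA_storage F) (MRA_conn P) k n = (P f k == None).
Proof.
move=> fn; apply/existsP/idP => [[f' /andP [] ] | Pfk].
  rewrite inE => Pf'k /existsP [b /andP [] ]; rewrite inE => /eqP -> /eqP bn.
  by have -> : f = f' by apply: val_inj; rewrite fn -bn.
by exists f; rewrite inE Pfk; apply/existsP; exists f; rewrite set11 fn eqxx.
Qed.

Lemma sumr_by_value (I : finType) (V : nmodType) (h : I -> nat) (m n : nat) (c : nat -> V) :
  (forall i, m <= h i < n) ->
  (\sum_i c (h i) = \sum_(m <= g < n) c g *+ #|[set i | h i == g]|)%R.
Proof.
move=> h_range; under [RHS]eq_bigr do rewrite -sumr_const big_mkcond /=.
rewrite exchange_big /=; apply: eq_bigr => i _.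
rewrite (eq_bigr (fun g => if g == h i then c (h i) else 0%R)); last first.
  by move=> g _; rewrite inE eq_sym; case: eqP => // ->.
by rewrite -big_mkcond big_nat1_eq h_range.
Qed.

Section MRACode.

Variables (K F S : nat) (P : 'M[option 'I_S]_(F, K)).
Hypothesis P_MRA : is_MRA P.

Lemma occ_apart (s : 'I_S) (x y : 'I_F * 'I_K) :
  x \in occ P s -> y \in occ P s -> x != y -> x.2 != y.2 /\ P x.1 y.2 = None.
Proof.
have [_ [_ _ C2]] := P_MRA; rewrite !inE => /eqP Px /eqP Py xy.
have [] // := C2 s x.1 y.1 x.2 y.2; first by rewrite -!surjective_pairing; exact/eqP.
by move=> _ /eqP.
Qed.

Lemma occ_card (s : 'I_S) : 1 < #|occ P s| <= K.
Proof.
have [_ [_ C1 _]] := P_MRA; rewrite C1 /=.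
have col_inj : {in occ P s &, injective (fun x : 'I_F * 'I_K => x.2)}.
  move=> x y xs ys; apply: contra_eq => xy; exact: (occ_apart xs ys xy).1.
by rewrite -(card_in_imset col_inj) -[X in _ <= X]card_ord max_card.
Qed.

Lemma occ_pred_dvd_fact (s : 'I_S) : (#|occ P s|).-1 %| K`!.
Proof.
have /andP [g_gt1 g_le] := occ_card s.
by apply: dvdn_fact; rewrite -subn1 subn_gt0 g_gt1 (leq_trans (leq_subr 1 _) g_le).
Qed.

Variable eta : nat.
Hypothesis eta_gt0 : 0 < eta.
Hypothesis occ_dvd_eta : forall s : 'I_S, (#|occ P s|).-1 %| eta.

Definition seg (s : 'I_S) : nat := eta %/ (#|occ P s|).-1.

Lemma seg_mul (s : 'I_S) : seg s * (#|occ P s|).-1 = eta.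
Proof. exact: divnK. Qed.

Lemma seg_gt0 (s : 'I_S) : 0 < seg s.
Proof. by move: eta_gt0; rewrite -(seg_mul s) muln_gt0 => /andP []. Qed.

(* The p-th IV wanted by reducer z.2 in the segment of batch z.1 that reducer y.2 is
   in charge of; segments are numbered by the position of y among the other
   occurrences. *)
Definition coded_iv (s : 'I_S) (y z : 'I_F * 'I_K) (p : nat) : nat * nat :=
  (val z.2, val z.1 * eta + (index y (enum (occ P s :\ z)) * seg s + p)).

Definition mra_msg (s : 'I_S) (y : 'I_F * 'I_K) (p : nat) : seq (nat * nat) :=
  [seq coded_iv s y z p | z <- enum (occ P s :\ y)].

Definition mra_codes (j : 'I_K) : seq (seq (nat * nat)) :=
  flatten [seq [seq mra_msg s y p | y <- enum [set y in occ P s | y.2 == j],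
                                    p <- iota 0 (seg s)] | s <- enum 'I_S].

Lemma mra_codesP (j : 'I_K) (L : seq (nat * nat)) :
  reflect (exists s y p, [/\ y \in occ P s, y.2 = j, p < seg s & L = mra_msg s y p])
          (L \in mra_codes j).
Proof.
apply: (iffP flatten_mapP) => [[s _ /allpairsP [[y p] /=]] | [s [y [p [ys yj ps ->]]]]].
  by rewrite mem_enum mem_iota inE => -[/andP [ys /eqP yj] /andP [_ ps] ->]; exists s, y, p.
exists s; first by rewrite mem_enum.
by apply/allpairsP; exists (y, p); rewrite mem_enum mem_iota inE ys yj eqxx.
Qed.

Lemma card_occD1 (s : 'I_S) (x : 'I_F * 'I_K) :
  x \in occ P s -> #|occ P s :\ x| = (#|occ P s|).-1.
Proof. by move=> xs; rewrite (cardsD1 x (occ P s)) xs. Qed.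

Lemma index_occD1_lt (s : 'I_S) (y z : 'I_F * 'I_K) :
  z \in occ P s -> y \in occ P s :\ z -> index y (enum (occ P s :\ z)) < (#|occ P s|).-1.
Proof. by move=> zs yz; rewrite -(card_occD1 zs) cardE index_mem mem_enum. Qed.

Lemma coded_iv_batch (s : 'I_S) (y z : 'I_F * 'I_K) (p : nat) :
  z \in occ P s -> y \in occ P s :\ z -> p < seg s -> (coded_iv s y z p).2 %/ eta = z.1.
Proof.
move=> zs yz ps; rewrite divnMDl // divn_small ?addn0 //.
apply: (@leq_trans ((index y (enum (occ P s :\ z))).+1 * seg s)).
  by rewrite mulSn addnC ltn_add2r.
by rewrite -(seg_mul s) mulnC leq_mul2l index_occD1_lt ?orbT.
Qed.

Local Notation acc := (has_access eta (@MRA_storage F) (MRA_conn P)).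

Lemma has_access_coded_iv (s : 'I_S) (x y z : 'I_F * 'I_K) (p : nat) :
  x \in occ P s -> z \in occ P s -> y \in occ P s :\ z -> z != x -> p < seg s ->
  acc x.2 (coded_iv s y z p).2.
Proof.
move=> xs zs yz zx ps; rewrite (has_access_MRA P x.2 (esym (coded_iv_batch zs yz ps))).
exact/eqP/(occ_apart zs xs zx).2.
Qed.

Lemma uniq_mra_msg (s : 'I_S) (y : 'I_F * 'I_K) (p : nat) : uniq (mra_msg s y p).
Proof.
rewrite map_inj_in_uniq ?enum_uniq // => z z'; rewrite !mem_enum !in_setD1.
move=> /andP [_ zs] /andP [_ z's] [/val_inj col_eq _].
by case: (eqVneq z z') => // /(occ_apart zs z's) []; rewrite col_eq eqxx.
Qed.

Lemma mra_codes_accessible (j : 'I_K) (L : seq (nat * nat)) (e : nat * nat) :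
  L \in mra_codes j -> e \in L -> acc j e.2.
Proof.
move=> /mra_codesP [s [y [p [ys <- ps ->]]]] /mapP [z].
rewrite mem_enum => zy ->; have [zy' zs] := setD1P zy.
by apply: has_access_coded_iv; rewrite // in_setD1 ys eq_sym zy'.
Qed.

Lemma coded_iv_onto (k : 'I_K) (n : 'I_(F * eta)) :
  ~~ acc k n -> exists s (x y : 'I_F * 'I_K) p,
    [/\ x \in occ P s, y \in occ P s :\ x, x.2 = k, p < seg s
      & coded_iv s y x p = (val k, val n)].
Proof.
move=> nacc; have f_lt : n %/ eta < F by rewrite ltn_divLR.
pose f := Ordinal f_lt.
case Pfk : (P f k) => [s|]; last first.
  by rewrite (has_access_MRA P k (f := f) erefl) Pfk in nacc.
pose x := (f, k); have xs : x \in occ P s by rewrite inE Pfk.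
pose a := n %% eta %/ seg s; pose p := n %% eta %% seg s.
have a_lt : a < size (enum (occ P s :\ x)).
  by rewrite -cardE (card_occD1 xs) ltn_divLR ?seg_gt0 // [_.-1 * _]mulnC seg_mul ltn_mod.
exists s, x, (nth x (enum (occ P s :\ x)) a), p; split=> //.
- by rewrite -mem_enum mem_nth.
- by rewrite ltn_mod seg_gt0.
by rewrite /coded_iv /= index_uniq ?enum_uniq // -divn_eq -divn_eq.
Qed.

Lemma mra_codes_decodable (k : 'I_K) (n : 'I_(F * eta)) :
  ~~ acc k n -> exists j : 'I_K,
    (j != k) && has (decodes_from eta (@MRA_storage F) (MRA_conn P) k (val k, val n))
                    (mra_codes j).
Proof.
move=> /coded_iv_onto [s [x [y [p [xs yx <- ps onto]]]]]; have [yx' ys] := setD1P yx.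
exists y.2; apply/andP; split; first by have [] := occ_apart ys xs yx'.
apply/hasP; exists (mra_msg s y p); first by apply/mra_codesP; exists s, y, p.
have x_msg : coded_iv s y x p \in mra_msg s y p.
  by apply: map_f; rewrite mem_enum in_setD1 xs eq_sym yx'.
rewrite /decodes_from uniq_mra_msg -onto x_msg /=.
apply/allP => e /mapP [z]; rewrite mem_enum => zy ->{e}; have [zy' zs] := setD1P zy.
case: (eqVneq z x) => [-> | zx]; first by rewrite eqxx.
by rewrite has_access_coded_iv ?orbT // in_setD1 ys eq_sym zy'.
Qed.

Lemma size_mra_codes (j : 'I_K) :
  size (mra_codes j) = \sum_(s < S) #|[set y in occ P s | y.2 == j]| * seg s.
Proof.
rewrite size_flatten /shape -map_comp sumnE big_map big_enum /=.
by apply: eq_bigr => s _; rewrite size_allpairs size_iota -cardE.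
Qed.

Lemma sum_size_mra_codes : \sum_(j < K) size (mra_codes j) = \sum_(s < S) #|occ P s| * seg s.
Proof.
under eq_bigr do rewrite size_mra_codes.
rewrite exchange_big /=; apply: eq_bigr => s _; rewrite -big_distrl /=; congr (_ * _).
rewrite -sum1_card (partition_big (fun y : 'I_F * 'I_K => y.2) xpredT) //=.
by apply: eq_bigr => j _; rewrite -sum1_card; apply: eq_bigl => y; rewrite inE.
Qed.

Lemma load_mra_codes :
  ((\sum_(j < K) size (mra_codes j))%:R / (K * F * eta)%:R
   = S%:R / (K * F)%:R + \sum_(2 <= g < K.+1) (S_count P g)%:R / (K * F * (g - 1))%:R
   :> rat)%R.
Proof.
have [[K_gt0 F_gt0 _] _] := P_MRA.
have share (s : 'I_S) : ((#|occ P s| * seg s)%:R / (K * F * eta)%:R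
    = (K * F)%:R^-1 + (K * F * (#|occ P s| - 1))%:R^-1 :> rat)%R.
  have /andP [g_gt1 _] := occ_card s.
  have pred_gt0 : 0 < (#|occ P s|).-1 by rewrite -subn1 subn_gt0.
  rewrite -(seg_mul s) subn1 -{1}[#|occ P s|](prednK (ltnW g_gt1)) mulSn natrD !natrM.
  by field; rewrite !pnatr_eq0 -!lt0n K_gt0 F_gt0 seg_gt0 pred_gt0.
rewrite sum_size_mra_codes natr_sum mulr_suml (eq_bigr _ (fun s _ => share s)).
rewrite big_split /= sumr_const card_ord mulr_natl; congr +%R.
rewrite (sumr_by_value (fun g => (K * F * (g - 1))%:R^-1)%R (m := 2) (n := K.+1)).
  by apply: eq_bigr => g _; rewrite mulr_natl.
by move=> s; rewrite ltnS; exact: occ_card.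
Qed.

End MRACode.

Local Open Scope ring_scope.

Theorem theorem2 (K F S : nat) (P : 'M[option 'I_S]_(F, K)) :
  is_MRA P ->
  comp_load (@MRA_storage F) = 1 /\
  achievable (@MRA_storage F) (MRA_conn P)
    (S%:R / (K * F)%:R
     + \sum_(2 <= g < K.+1) (S_count P g)%:R / (K * F * (g - 1))%:R).
Proof.
move=> P_MRA; have [[_ F_gt0 _] _] := P_MRA.
split; first exact: comp_load_MRA_storage.
have eta_gt0 := fact_gt0 K; have occ_dvd := occ_pred_dvd_fact P_MRA.
rewrite -(load_mra_codes P_MRA eta_gt0 occ_dvd).
apply: (achievable_xor_codes _ _ eta_gt0) => [j L e | k n].
  exact: (mra_codes_accessible P_MRA eta_gt0 occ_dvd).
exact: (mra_codes_decodable P_MRA eta_gt0 occ_dvd).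
Qed.
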